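(* Let $A\in\mathbb{R}^{nm\times nm}$, let $x=\operatorname{vec}(X)\in S^{nm-1}\cap\mathcal{M}_r$ with thin SVD $X=USV^\top$ ($U^\top U=I_r$, $V^\top V=I_r$, $S$ diagonal positive), and set $\mathfrak{R}(x)=x^\top Ax$, $C=A-\mathfrak{R}(x)I_{nm}$. Let $U_\xi\in\mathbb{R}^{n\times r}$, $V_\xi\in\mathbb{R}^{m\times r}$, $S_\xi\in\mathbb{R}^{r\times r}$ and $\xi=\operatorname{vec}(U_\xi V^\top+UV_\xi^\top+US_\xi V^\top)$, and put \[ \tau_\xi=\begin{bmatrix}\operatorname{vec}(U_\xi)\\ \operatorname{vec}(V_\xi^\top)\\ \operatorname{vec}(S_\xi)\end{bmatrix}\in\mathbb{R}^{nr+mr+r^2}. \] Then the following are equivalent: (a) $U^\top U_\xi=0$, $V^\top V_\xi=0$, $\operatorname{vec}(S_\xi)^\top\operatorname{vec}(S)=0$, and \[ (I-xx^\top)\,\mathrm{P}_{T_X\mathcal{M}_r}\,C\,\mathrm{P}_{T_X\mathcal{M}_r}\,(I-xx^\top)\,\xi=-\mathrm{P}_{T_X\mathcal{M}_r}(I-xx^\top)Ax; \] (b) $B^\top\tau_\xi=0$ and \[ (I-BB^\top)\,C_{\mathrm{loc}}\,(I-BB^\top)\,\tau_\xi=-(I-BB^\top)\,g, \] where \[ B=\begin{bmatrix} I_r\otimes U&0&0\\ 0&V\otimes I_r&0\\ 0&0&\operatorname{vec}(S)\end{bmatrix},\quad C_{\mathrm{loc}}=\begin{bmatrix}C_{v,v}&C_{v,u}&C_{v,vu}\\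 C_{u,v}&C_{u,u}&C_{u,vu}\\ C_{vu,v}&C_{vu,u}&C_{vu,vu}\end{bmatrix},\quad g=\begin{bmatrix}A_{v,v}\operatorname{vec}(US)\\ A_{u,u}\operatorname{vec}(SV^\top)\\ A_{vu,vu}\operatorname{vec}(S)\end{bmatrix}. \]
   Context: $\operatorname{vec}$ is columnwise reshaping, so $\operatorname{vec}(ABC)=(C^\top\otimes A)\operatorname{vec}(B)$. $\mathcal{M}_r$ is the manifold of (vectorized) $n\times m$ matrices of rank exactly $r$, $S^{nm-1}$ the unit sphere in $\mathbb{R}^{nm}$, and $\mathrm{P}_{T_X\mathcal{M}_r}=VV^\top\otimes UU^\top+VV^\top\otimes(I_n-UU^\top)+(I_m-VV^\top)\otimes UU^\top$ is the orthogonal projection onto the tangent space of $\mathcal{M}_r$ at $X$. Define $E_v=V\otimes I_n\in\mathbb{R}^{nm\times nr}$, $E_u=I_m\otimes U\in\mathbb{R}^{nm\times mr}$, $E_{vu}=V\otimes U\in\mathbb{R}^{nm\times r^2}$, and for any $M\in\mathbb{R}^{nm\times nm}$ and $a,b\in\{v,u,vu\}$ set $M_{a,b}=E_a^\top M E_b$ (e.g. $M_{v,v}=(V^\top\otimes I_n)M(V\otimes I_n)$, $M_{v,u}=(V^\top\otimes I_n)M(I_m\otimes U)$, $M_{v,vu}=(V^\top\otimes I_n)M(V\otimes U)$, $M_{u,u}=(I_m\otimes U^\top)M(I_m\otimes U)$, $M_{vu,vu}=(V^\top\otimes U^\top)M(V\otimes U)$). Note $\|\operatorname{vec}(S)\|=\|x\|=1$,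 so $B$ has orthonormal columns. *)

From HB Require Import structures.
From mathcomp Require Import all_boot all_order all_algebra.
Set Implicit Arguments. Unset Strict Implicit. Unset Printing Implicit Defensive.
Import Order.TTheory GRing.Theory Num.Theory.
Local Open Scope ring_scope.

(* Index arithmetic: k : 'I_(a*b) is identified with the pair (k %/ b, k %% b). *)
Lemma kmod_lt (a b : nat) (k : 'I_(a * b)) : (k %% b < b)%N.
Proof.
case: b k => [|b] k; last by rewrite ltn_mod.
by case: k => k; rewrite muln0.
Qed.

Lemma kdiv_lt (a b : nat) (k : 'I_(a * b)) : (k %/ b < a)%N.
Proof.
case: b k => [|b] k; first by case: k => k; rewrite muln0.
by rewrite ltn_divLR.
Qed.

Definition kdiv (a b : nat) (k : 'I_(a * b)) : 'I_a := Ordinal (kdiv_lt k).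
Definition kmod (a b : nat) (k : 'I_(a * b)) : 'I_b := Ordinal (kmod_lt k).

Definition kron (R : pzRingType) (m1 n1 m2 n2 : nat)
  (A : 'M[R]_(m1, n1)) (B : 'M[R]_(m2, n2)) : 'M[R]_(m1 * m2, n1 * n2) :=
  \matrix_(i, j) (A (kdiv i) (kdiv j) * B (kmod i) (kmod j)).

(* Columnwise vectorization: vec(X)[j*n + i] = X[i,j] for X : n x m. *)
Definition vec (R : pzRingType) (n m : nat) (X : 'M[R]_(n, m)) : 'cV[R]_(m * n) :=
  \col_k X (kmod k) (kdiv k).

(* Orthogonal projection onto the tangent space of M_r at X = U S V^T. *)
Definition PT (R : pzRingType) (n m r : nat) (U : 'M[R]_(n, r)) (V : 'M[R]_(m, r))
  : 'M[R]_(m * n) :=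
  kron (V *m V^T) (U *m U^T) + kron (V *m V^T) (1%:M - U *m U^T)
  + kron (1%:M - V *m V^T) (U *m U^T).

(* Both sides are the Newton equation of the Rayleigh quotient, once in
   ambient coordinates and once in the coordinates tau of the
   overparametrisation xi = E tau, where E = [V ⊗ I_n | I_m ⊗ U | V ⊗ U]
   spans the tangent space.  Under the gauge condition B^T tau = 0, the
   matrix I - BB^T is the orthogonal projector onto the gauge-free
   coordinates, and the frame identity E (I - BB^T) E^T = P - xx^T shows that
   the ambient projector (I - xx^T) P = P (I - xx^T) factors as F F^T with
   F = E (I - BB^T).  Both equations then say that w = C xi + A x is killed
   by F F^T, resp. by F^T, and these agree since F F^T w = 0 forces
   |F^T w|^2 = 0. *)
From HB Require Import structures.
From mathcomp Require Import all_boot all_order all_algebra.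
Import Order.TTheory GRing.Theory Num.Theory.
Set Implicit Arguments. Unset Strict Implicit. Unset Printing Implicit Defensive.
Local Open Scope ring_scope.

Lemma kpair_subproof (a b : nat) (i : 'I_a) (j : 'I_b) : (i * b + j < a * b)%N.
Proof.
case: a i => [|a] [i lt_ia] //=; case: b j => [|b] [j lt_jb] //=.
apply: (@leq_trans (i * b.+1 + b.+1)); first by rewrite ltn_add2l.
by rewrite -mulSnr leq_mul2r lt_ia orbT.
Qed.

Definition kpair (a b : nat) (i : 'I_a) (j : 'I_b) : 'I_(a * b) :=
  Ordinal (kpair_subproof i j).

Lemma kdiv_kpair a b (i : 'I_a) (j : 'I_b) : kdiv (kpair i j) = i.
Proof.
apply: val_inj => /=; case: b j => [|b] [j lt_jb] //=.
by rewrite divnMDl // divn_small // addn0.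
Qed.

Lemma kmod_kpair a b (i : 'I_a) (j : 'I_b) : kmod (kpair i j) = j.
Proof.
by apply: val_inj => /=; case: b j => [|b] [j lt_jb] //=; rewrite modnMDl modn_small.
Qed.

Lemma kdivmodK a b (k : 'I_(a * b)) : kpair (kdiv k) (kmod k) = k.
Proof. by apply: val_inj => /=; rewrite -divn_eq. Qed.

Lemma eq_kdivmod a b (k l : 'I_(a * b)) :
  (k == l) = (kdiv k == kdiv l) && (kmod k == kmod l).
Proof.
apply/eqP/andP => [->//|[/eqP eq_div /eqP eq_mod]].
by rewrite -(kdivmodK k) -(kdivmodK l) eq_div eq_mod.
Qed.

Lemma big_kpair (V : nmodType) a b (F : 'I_(a * b) -> V) :
  \sum_k F k = \sum_(i < a) \sum_(j < b) F (kpair i j).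
Proof.
rewrite pair_big /= (reindex (fun p : 'I_a * 'I_b => kpair p.1 p.2)) //.
exists (fun k => (kdiv k, kmod k)) => [[i j] _|k _] /=.
  by rewrite kdiv_kpair kmod_kpair.
by rewrite kdivmodK.
Qed.

Section Kronecker.
Variable R : comPzRingType.

Lemma kron_mulmx m1 n1 m2 n2 p1 p2 (A : 'M[R]_(m1, n1)) (B : 'M[R]_(m2, n2))
  (C : 'M[R]_(n1, p1)) (D : 'M[R]_(n2, p2)) :
  kron A B *m kron C D = kron (A *m C) (B *m D).
Proof.
apply/matrixP => i j; rewrite !mxE big_kpair big_distrl /=; apply: eq_bigr => k _.
rewrite big_distrr /=; apply: eq_bigr => l _.
by rewrite !mxE kdiv_kpair kmod_kpair mulrACA.
Qed.

Lemma trmx_kron m1 n1 m2 n2 (A : 'M[R]_(m1, n1)) (B : 'M[R]_(m2, n2)) :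
  (kron A B)^T = kron A^T B^T.
Proof. by apply/matrixP => i j; rewrite !mxE. Qed.

Lemma kron1 m n : kron (1%:M : 'M[R]_m) (1%:M : 'M[R]_n) = 1%:M.
Proof.
apply/matrixP => i j; rewrite !mxE eq_kdivmod.
by case: (kdiv i == kdiv j); case: (kmod i == kmod j); rewrite ?mulr1 ?mulr0.
Qed.

Lemma kronBl m1 n1 m2 n2 (A A' : 'M[R]_(m1, n1)) (B : 'M[R]_(m2, n2)) :
  kron (A - A') B = kron A B - kron A' B.
Proof. by apply/matrixP => i j; rewrite !mxE mulrBl. Qed.

Lemma kronBr m1 n1 m2 n2 (A : 'M[R]_(m1, n1)) (B B' : 'M[R]_(m2, n2)) :
  kron A (B - B') = kron A B - kron A B'.
Proof. by apply/matrixP => i j; rewrite !mxE mulrBr. Qed.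

Lemma vec_mulmx q n m p (A : 'M[R]_(q, n)) (X : 'M[R]_(n, m)) (B : 'M[R]_(m, p)) :
  vec (A *m X *m B) = kron B^T A *m vec X.
Proof.
apply/matrixP => k z; rewrite !mxE big_kpair; apply: eq_bigr => j _.
rewrite !mxE big_distrl /=; apply: eq_bigr => i _.
by rewrite !mxE kdiv_kpair kmod_kpair mulrC mulrA.
Qed.

Lemma vec_mulmxl q n m (A : 'M[R]_(q, n)) (X : 'M[R]_(n, m)) :
  vec (A *m X) = kron 1%:M A *m vec X.
Proof. by rewrite -[A *m X]mulmx1 vec_mulmx trmx1. Qed.

Lemma vec_mulmxr n m p (X : 'M[R]_(n, m)) (B : 'M[R]_(m, p)) :
  vec (X *m B) = kron B^T 1%:M *m vec X.
Proof. by rewrite -vec_mulmx mul1mx. Qed.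

Lemma vecD n m (X Y : 'M[R]_(n, m)) : vec (X + Y) = vec X + vec Y.
Proof. by apply/matrixP => i j; rewrite !mxE. Qed.

Lemma vec_eq0 n m (X : 'M[R]_(n, m)) : (vec X == 0) = (X == 0).
Proof.
apply/eqP/eqP => [vecX0|->]; last by apply/matrixP => i j; rewrite !mxE.
apply/matrixP => i j; have := congr1 (fun M : 'cV[R]_(m * n) => M (kpair j i) 0) vecX0.
by rewrite !mxE kdiv_kpair kmod_kpair.
Qed.

End Kronecker.

Section ComplProj.
Variable R : comPzRingType.

Definition compl_proj K L (B : 'M[R]_(K, L)) : 'M[R]_K := 1%:M - B *m B^T.

Lemma trmx_compl_proj K L (B : 'M[R]_(K, L)) : (compl_proj B)^T = compl_proj B.
Proof. by rewrite /compl_proj linearB /= trmx1 trmx_mul trmxK. Qed.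

Lemma compl_proj_idem K L (B : 'M[R]_(K, L)) :
  B^T *m B = 1%:M -> compl_proj B *m compl_proj B = compl_proj B.
Proof.
move=> BB1; rewrite /compl_proj mulmxBl mul1mx mulmxBr mulmx1 -!mulmxA.
by rewrite [B^T *m (B *m _)]mulmxA BB1 mul1mx subrr subr0.
Qed.

Lemma compl_proj_id K L (B : 'M[R]_(K, L)) (tau : 'cV[R]_K) :
  B^T *m tau = 0 -> compl_proj B *m tau = tau.
Proof. by move=> Btau0; rewrite /compl_proj mulmxBl mul1mx -mulmxA Btau0 mulmx0 subr0. Qed.

End ComplProj.

Section ProjectedNewton.
Variable R : realFieldType.

Lemma mulmx_trmx_eq0 N K (F : 'M[R]_(N, K)) (w : 'cV[R]_N) :
  F *m F^T *m w = 0 <-> F^T *m w = 0.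
Proof.
split => [FFw0|Fw0]; last by rewrite -mulmxA Fw0 mulmx0.
set y := F^T *m w.
have yy0 : y^T *m y = 0.
  by rewrite /y trmx_mul trmxK -mulmxA [F *m _]mulmxA FFw0 mulmx0.
have := congr1 (fun M : 'M[R]_1 => M 0 0) yy0; rewrite !mxE => /eqP.
rewrite psumr_eq0 => [/allP yi0|i _]; last by rewrite mxE -expr2 sqr_ge0.
apply/matrixP => i j; rewrite (ord1 j) [RHS]mxE.
by have := yi0 i (mem_index_enum _); rewrite mxE /= mulf_eq0 orbb => /eqP.
Qed.

Lemma frame_newton_equiv N K (E : 'M[R]_(N, K)) (M : 'M[R]_K) (C A : 'M[R]_N)
    (x : 'cV[R]_N) (tau : 'cV[R]_K) :
  M^T = M -> M *m M = M -> M *m tau = tau ->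
  (E *m M) *m (E *m M)^T *m C *m (E *m tau)
      = - ((E *m M) *m (E *m M)^T *m A *m x)
  <-> M *m (E^T *m C *m E) *m M *m tau = - (M *m (E^T *m A *m x)).
Proof.
move=> Mt MM Mtau; set F := E *m M.
have lhsE : M *m (E^T *m C *m E) *m M *m tau = F^T *m C *m (E *m tau).
  by rewrite /F trmx_mul Mt -mulmxA Mtau !mulmxA.
have rhsE : M *m (E^T *m A *m x) = F^T *m A *m x by rewrite /F trmx_mul Mt !mulmxA.
rewrite lhsE rhsE; set w := C *m (E *m tau) + A *m x.
have sumE p (G : 'M[R]_(p, N)) : G *m C *m (E *m tau) + G *m A *m x = G *m w.
  by rewrite mulmxDr !mulmxA.
split => /eqP; rewrite -addr_eq0 sumE => /eqP /mulmx_trmx_eq0 w0;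
  by apply/eqP; rewrite -addr_eq0 sumE w0.
Qed.

Lemma tangent_newton_lhs N (P C : 'M[R]_N) (x xi : 'cV[R]_N) :
  P^T = P -> P *m x = x -> P *m xi = xi -> x^T *m xi = 0 ->
  (1%:M - x *m x^T) *m P *m C *m P *m (1%:M - x *m x^T) *m xi
    = (P - x *m x^T) *m C *m xi.
Proof.
move=> Pt Px Pxi xxi0.
have xP : x^T *m P = x^T by rewrite -{1}Pt -trmx_mul Px.
have Ixi : (1%:M - x *m x^T) *m xi = xi.
  by rewrite mulmxBl mul1mx -mulmxA xxi0 mulmx0 subr0.
have IxP : (1%:M - x *m x^T) *m P = P - x *m x^T by rewrite mulmxBl mul1mx -mulmxA xP.
by rewrite -mulmxA Ixi -mulmxA Pxi IxP.
Qed.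

Lemma tangent_newton_rhs N (P : 'M[R]_N) (x : 'cV[R]_N) :
  P *m x = x -> P *m (1%:M - x *m x^T) = P - x *m x^T.
Proof. by move=> Px; rewrite mulmxBr mulmx1 mulmxA Px. Qed.

(* [E^T x = B c]: x is itself a gauge direction, so it is orthogonal to
   every gauge-free [E tau]. *)
Lemma projected_newton_equiv N K L (E : 'M[R]_(N, K)) (B : 'M[R]_(K, L))
    (P C A : 'M[R]_N) (x : 'cV[R]_N) (c : 'cV[R]_L) (tau : 'cV[R]_K) :
  B^T *m B = 1%:M -> E *m compl_proj B *m E^T = P - x *m x^T ->
  P *m E = E -> P^T = P -> P *m x = x -> E^T *m x = B *m c ->
  B^T *m tau = 0 ->
  ((1%:M - x *m x^T) *m P *m C *m P *m (1%:M - x *m x^T) *m (E *m tau)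
      = - (P *m (1%:M - x *m x^T) *m A *m x))
  <-> (compl_proj B *m (E^T *m C *m E) *m compl_proj B *m tau
      = - (compl_proj B *m (E^T *m A *m x))).
Proof.
move=> BB1 frameE PE Pt Px Ex Btau0.
have x_xi0 : x^T *m (E *m tau) = 0.
  by rewrite mulmxA -[x^T *m E]trmxK trmx_mul trmxK Ex trmx_mul -!mulmxA Btau0 !mulmx0.
have Pxi : P *m (E *m tau) = E *m tau by rewrite mulmxA PE.
rewrite tangent_newton_lhs // tangent_newton_rhs //.
have -> : P - x *m x^T = (E *m compl_proj B) *m (E *m compl_proj B)^T.
  by rewrite -frameE trmx_mul trmx_compl_proj -!mulmxA [compl_proj B *m (_ *m _)]mulmxA
    compl_proj_idem.
apply: frame_newton_equiv; [exact: trmx_compl_proj | exact: compl_proj_idem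
  | exact: compl_proj_id].
Qed.

End ProjectedNewton.

Section BlockColumns.
Variable R : comPzRingType.
Variables (N k1 k2 k3 : nat) (E1 : 'M[R]_(N, k1)) (E2 : 'M[R]_(N, k2)) (E3 : 'M[R]_(N, k3)).

Lemma tr_row3_mulmx p (Y : 'M[R]_(N, p)) :
  (row_mx (row_mx E1 E2) E3)^T *m Y = col_mx (col_mx (E1^T *m Y) (E2^T *m Y)) (E3^T *m Y).
Proof. by rewrite !tr_row_mx !mul_col_mx. Qed.

Lemma tr_row3_mulmx_row3 (C : 'M[R]_N) :
  (row_mx (row_mx E1 E2) E3)^T *m C *m row_mx (row_mx E1 E2) E3 =
  block_mx (block_mx (E1^T *m C *m E1) (E1^T *m C *m E2)
                     (E2^T *m C *m E1) (E2^T *m C *m E2))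
           (col_mx (E1^T *m C *m E3) (E2^T *m C *m E3))
           (row_mx (E3^T *m C *m E1) (E3^T *m C *m E2))
           (E3^T *m C *m E3).
Proof. by rewrite tr_row3_mulmx !mul_col_row mul_col_mx mul_mx_row. Qed.

End BlockColumns.

Section TangentFrame.
Variables (R : comPzRingType) (n m r : nat) (U : 'M[R]_(n, r)) (V : 'M[R]_(m, r)).

Definition tangent_frame : 'M[R]_(m * n, r * n + m * r + r * r) :=
  row_mx (row_mx (kron V 1%:M) (kron 1%:M U)) (kron V U).

Definition gauge_basis (S : 'M[R]_r) : 'M[R]_(r * n + m * r + r * r, r * r + r * r + 1) :=
  block_mx (block_mx (kron 1%:M U) 0 0 (kron V 1%:M)) 0 0 (vec S).

Lemma PTE : PT U V = kron (V *m V^T) 1%:M + kron 1%:M (U *m U^T) - kron (V *m V^T) (U *m U^T).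
Proof. by rewrite /PT kronBr kronBl [kron _ (U *m U^T) + _]addrC subrK addrA. Qed.

Lemma trmx_PT : (PT U V)^T = PT U V.
Proof. by rewrite PTE !linearB !linearD /= !trmx_kron !trmx_mul !trmxK !trmx1. Qed.

Lemma vec_tangent (Uxi : 'M[R]_(n, r)) (Vxi : 'M[R]_(m, r)) (Sxi : 'M[R]_r) :
  vec (Uxi *m V^T + U *m Vxi^T + U *m Sxi *m V^T)
  = tangent_frame *m col_mx (col_mx (vec Uxi) (vec Vxi^T)) (vec Sxi).
Proof. by rewrite !mul_row_col !vecD vec_mulmx vec_mulmxr vec_mulmxl !trmxK. Qed.

Lemma tangent_frame_mul_gauge S :
  tangent_frame *m gauge_basis S = row_mx (row_mx (kron V U) (kron V U)) (vec (U *m S *m V^T)).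
Proof.
rewrite !mul_row_block !mulmx0 !addr0 !add0r !kron_mulmx !mulmx1 !mul1mx.
by rewrite vec_mulmx trmxK.
Qed.

(* No orthonormality is needed: both sides expand to
   [kron (VV^T) 1 + kron 1 (UU^T) - kron (VV^T) (UU^T) - x x^T]. *)
Lemma tangent_frame_compl_proj S :
  tangent_frame *m compl_proj (gauge_basis S) *m tangent_frame^T
  = PT U V - vec (U *m S *m V^T) *m (vec (U *m S *m V^T))^T.
Proof.
rewrite /compl_proj mulmxBr mulmx1 mulmxBl mulmxA -[_ *m _ *m _^T *m _]mulmxA -trmx_mul.
rewrite tangent_frame_mul_gauge /tangent_frame !tr_row_mx !mul_row_col PTE.
rewrite !trmx_kron !kron_mulmx !trmx1 !mulmx1.
by rewrite !opprD !addrA addrK.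
Qed.

Lemma gauge_basis_orthogonal S (Uxi : 'M[R]_(n, r)) (Vxi : 'M[R]_(m, r)) (Sxi : 'M[R]_r) :
  (gauge_basis S)^T *m col_mx (col_mx (vec Uxi) (vec Vxi^T)) (vec Sxi) = 0 <->
  [/\ U^T *m Uxi = 0, V^T *m Vxi = 0 & (vec Sxi)^T *m vec S = 0].
Proof.
rewrite /gauge_basis !tr_block_mx !trmx0 !mul_block_col !mul0mx !addr0 !add0r.
rewrite !trmx_kron trmx1 -vec_mulmxl -vec_mulmxr.
have trE k l p (Y : 'M[R]_(k, l)) (Z : 'M[R]_(k, p)) : (Y^T *m Z == 0) = (Z^T *m Y == 0).
  by rewrite -trmx_eq0 trmx_mul trmxK.
split => [/eqP|[/eqP UU0 /eqP VV0 /eqP SS0]]; last apply/eqP;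
  rewrite !col_mx_eq0 !vec_eq0 (trE _ _ _ Vxi) (trE _ _ _ (vec S)).
  by case/andP => /andP[/eqP ? /eqP ?] /eqP.
by rewrite UU0 VV0 SS0.
Qed.

Hypotheses (UtU : U^T *m U = 1%:M) (VtV : V^T *m V = 1%:M).

Lemma PT_tangent_frame : PT U V *m tangent_frame = tangent_frame.
Proof.
have VVV : V *m V^T *m V = V by rewrite -mulmxA VtV mulmx1.
have UUU : U *m U^T *m U = U by rewrite -mulmxA UtU mulmx1.
rewrite /tangent_frame !mul_mx_row PTE !mulmxBl !mulmxDl !kron_mulmx !mulmx1 !mul1mx VVV UUU.
by rewrite addrK [X in row_mx (row_mx _ X) _]addrAC subrr add0r addrK.
Qed.

Lemma PT_vec_svd S : PT U V *m vec (U *m S *m V^T) = vec (U *m S *m V^T).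
Proof.
have := vec_tangent 0 0 S; rewrite mul0mx trmx0 mulmx0 !add0r => ->.
by rewrite mulmxA PT_tangent_frame.
Qed.

Lemma trmx_tangent_frame_vec S :
  tangent_frame^T *m vec (U *m S *m V^T)
  = gauge_basis S *m col_mx (col_mx (vec S) (vec S)) 1%:M.
Proof.
rewrite tr_row3_mulmx /gauge_basis !mul_block_col !mul0mx !addr0 !add0r mulmx1.
by rewrite vec_mulmx !trmx_kron !trmxK !mulmxA !kron_mulmx !trmx1 !mul1mx UtU VtV kron1 mul1mx.
Qed.

Lemma vec_svd_norm S :
  (vec (U *m S *m V^T))^T *m vec (U *m S *m V^T) = (vec S)^T *m vec S.
Proof.
rewrite vec_mulmx trmxK trmx_mul mulmxA -[_ *m (kron V U)^T *m _]mulmxA trmx_kron kron_mulmx.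
by rewrite UtU VtV kron1 mulmx1.
Qed.

Lemma gauge_basis_orthonormal S :
  (vec S)^T *m vec S = 1%:M -> (gauge_basis S)^T *m gauge_basis S = 1%:M.
Proof.
move=> SS1; rewrite /gauge_basis !tr_block_mx !trmx0 !mulmx_block !mulmx0 !mul0mx.
rewrite !addr0 !add0r SS1 !trmx_kron !kron_mulmx !trmx1 !mul1mx UtU VtV !kron1.
by rewrite -!scalar_mx_block.
Qed.

End TangentFrame.

Theorem proposition2 (R : realFieldType) (n m r : nat)
  (A : 'M[R]_(m * n)) (X : 'M[R]_(n, m))
  (U : 'M[R]_(n, r)) (S : 'M[R]_r) (V : 'M[R]_(m, r))
  (Uxi : 'M[R]_(n, r)) (Vxi : 'M[R]_(m, r)) (Sxi : 'M[R]_r) :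
  let x := vec X in
  (x^T *m x) 0 0 = 1 ->
  \rank X = r ->
  X = U *m S *m V^T ->
  U^T *m U = 1%:M ->
  V^T *m V = 1%:M ->
  (forall i j : 'I_r, i != j -> S i j = 0) ->
  (forall i : 'I_r, 0 < S i i) ->
  let Rx := (x^T *m A *m x) 0 0 in
  let C := A - Rx%:M in
  let P := PT U V in
  let Ix := 1%:M - x *m x^T in
  let xi := vec (Uxi *m V^T + U *m Vxi^T + U *m Sxi *m V^T) in
  let tau := col_mx (col_mx (vec Uxi) (vec Vxi^T)) (vec Sxi) in
  let Ev := kron V (1%:M : 'M[R]_n) in
  let Eu := kron (1%:M : 'M[R]_m) U in
  let Evu := kron V U in
  let B := block_mx (block_mx (kron (1%:M : 'M[R]_r) U) 0 0
                              (kron V (1%:M : 'M[R]_r))) 0 0 (vec S) in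
  let Cloc := block_mx
      (block_mx (Ev^T *m C *m Ev) (Ev^T *m C *m Eu)
                (Eu^T *m C *m Ev) (Eu^T *m C *m Eu))
      (col_mx (Ev^T *m C *m Evu) (Eu^T *m C *m Evu))
      (row_mx (Evu^T *m C *m Ev) (Evu^T *m C *m Eu))
      (Evu^T *m C *m Evu) in
  let g := col_mx (col_mx (Ev^T *m A *m Ev *m vec (U *m S))
                          (Eu^T *m A *m Eu *m vec (S *m V^T)))
                  (Evu^T *m A *m Evu *m vec S) in
  let IB := 1%:M - B *m B^T in
  ([/\ U^T *m Uxi = 0, V^T *m Vxi = 0, (vec Sxi)^T *m vec S = 0
     & Ix *m P *m C *m P *m Ix *m xi = - (P *m Ix *m A *m x)])
  <->
  (B^T *m tau = 0 /\ IB *m Cloc *m IB *m tau = - (IB *m g)).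
Proof.
move=> x xx1 _ X_svd UtU VtV _ _ Rx C P Ix xi tau Ev Eu Evu B Cloc g IB.
subst X.
have SS1 : (vec S)^T *m vec S = 1%:M.
  by rewrite -(vec_svd_norm UtU VtV) [LHS]mx11_scalar xx1.
have Cloc_frame : Cloc = (tangent_frame U V)^T *m C *m tangent_frame U V.
  by rewrite tr_row3_mulmx_row3.
have g_frame : g = (tangent_frame U V)^T *m A *m x.
  have Evx : Ev *m vec (U *m S) = x by rewrite [RHS]vec_mulmxr trmxK.
  have Eux : Eu *m vec (S *m V^T) = x by rewrite /x -mulmxA [RHS]vec_mulmxl.
  have Evux : Evu *m vec S = x by rewrite /x vec_mulmx trmxK.
  by rewrite -mulmxA tr_row3_mulmx /g -!mulmxA Evx Eux Evux.
have newton := projected_newton_equiv C A (gauge_basis_orthonormal UtU VtV SS1)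
  (tangent_frame_compl_proj U V S) (PT_tangent_frame UtU VtV) (trmx_PT U V)
  (PT_vec_svd UtU VtV S) (trmx_tangent_frame_vec UtU VtV S).
have gauge := gauge_basis_orthogonal U V S Uxi Vxi Sxi.
rewrite /xi vec_tangent Cloc_frame g_frame; split.
  case=> UU0 VV0 SS0 ambient; have Btau0 : B^T *m tau = 0 by apply/gauge.
  by split=> //; move/(newton _ Btau0): ambient.
case=> Btau0 local; have [UU0 VV0 SS0] := gauge.1 Btau0.
by split=> //; move/(newton _ Btau0): local.
Qed.
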